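(* Let $R$ be any binary relation on $U$. Then $\mathrm{DM(RS)}$ is completely distributive if and only if one (equivalently, each) of the lattices $\wp(U)^{\blacktriangle}$, $\wp(U)^{\blacktriangledown}$, $\wp(U)^{\vartriangle}$, $\wp(U)^{\triangledown}$ (ordered by $\subseteq$) is completely distributive.
   Context: Let $U$ be a set and $R\subseteq U\times U$ a binary relation. For $x\in U$, $R(x)=\{y\in U\mid (x,y)\in R\}$ and $\breve R(x)=\{y\in U\mid (y,x)\in R\}$. For $X\subseteq U$: $X^{\blacktriangledown}=\{x\in U\mid R(x)\subseteq X\}$, $X^{\blacktriangle}=\{x\in U\mid R(x)\cap X\neq\emptyset\}$, $X^{\triangledown}=\{x\in U\mid \breve R(x)\subseteq X\}$, $X^{\vartriangle}=\{x\in U\mid \breve R(x)\cap X\neq\emptyset\}$; composites like $X^{\vartriangle\blacktriangledown}$ mean $(X^{\vartriangle})^{\blacktriangledown}$. $\wp(U)^{\blacktriangledown}=\{X^{\blacktriangledown}\mid X\subseteq U\}$ and similarly $\wp(U)^{\blacktriangle},\wp(U)^{\triangledown},\wp(U)^{\vartriangle}$; each is a complete lattice under $\subseteq$. $\mathcal S=\{x\in U\mid |R(x)|=1\}$. $\mathrm{RS}=\{(X^{\blacktriangledown},X^{\blacktriangle})\mid X\subseteq U\}$ ordered coordinatewise; $\mathrm{DM(RS)}$ is its Dedekind–MacNeille completion, identified with $\{(A,B)\in\wp(U)^{\blacktriangledown}\times\wp(U)^{\blacktriangle}\mid A^{\vartriangle\blacktriangle}\subseteq B,\ A\cap\mathcal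 S=B\cap\mathcal S\}$ ordered coordinatewise, with meets $\bigwedge_i(X_i,Y_i)=(\bigcap_iX_i,(\bigcap_iY_i)^{\triangledown\blacktriangle})$ and joins $\bigvee_i(X_i,Y_i)=((\bigcup_iX_i)^{\vartriangle\blacktriangledown},\bigcup_iY_i)$. A complete lattice is completely distributive if $\bigwedge_{i\in I}\bigvee_{j\in J}x_{i,j}=\bigvee_{f\colon I\to J}\bigwedge_{i\in I}x_{i,f(i)}$ for all doubly indexed families. *)

Set Implicit Arguments.

Section RoughSets.
Variables (U : Type) (R : U -> U -> Prop).

Definition subs (X Y : U -> Prop) : Prop := forall x, X x -> Y x.

Definition boxB (X : U -> Prop) : U -> Prop := fun x => forall y, R x y -> X y.    (* X^▼ *)
Definition diaB (X : U -> Prop) : U -> Prop := fun x => exists y, R x y /\ X y.    (* X^▲ *)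
Definition boxW (X : U -> Prop) : U -> Prop := fun x => forall y, R y x -> X y.    (* X^▽ *)
Definition diaW (X : U -> Prop) : U -> Prop := fun x => exists y, R y x /\ X y.    (* X^△ *)

(* ℘(U)^op = { X^op | X ⊆ U } *)
Definition image_of (op : (U -> Prop) -> (U -> Prop)) (A : U -> Prop) : Prop :=
  exists X, A = op X.

Definition Sgl (x : U) : Prop := exists y, R x y /\ forall z, R x z -> z = y.

(* DM(RS) identified with pairs (A,B) *)
Definition DMRS (p : (U -> Prop) * (U -> Prop)) : Prop :=
  image_of boxB (fst p) /\ image_of diaB (snd p) /\
  subs (diaB (diaW (fst p))) (snd p) /\
  (forall x, Sgl x -> ((fst p) x <-> (snd p) x)).

Definition pair_le (p q : (U -> Prop) * (U -> Prop)) : Prop :=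
  subs (fst p) (fst q) /\ subs (snd p) (snd q).

End RoughSets.

Definition isLub {T : Type} (L : T -> Prop) (le : T -> T -> Prop)
  (S : T -> Prop) (a : T) : Prop :=
  L a /\ (forall s, S s -> le s a) /\
  (forall b, L b -> (forall s, S s -> le s b) -> le a b).

Definition isGlb {T : Type} (L : T -> Prop) (le : T -> T -> Prop)
  (S : T -> Prop) (a : T) : Prop :=
  L a /\ (forall s, S s -> le a s) /\
  (forall b, L b -> (forall s, S s -> le b s) -> le b a).

(* Complete distributivity of the complete lattice (L, le):
   /\_i \/_j x_{i,j} = \/_{f : I -> J} /\_i x_{i, f i} for all doubly indexed families,
   where meets and joins are those of (L, le). *)
Definition completely_distributive {T : Type} (L : T -> Prop) (le : T -> T -> Prop) : Prop :=
  forall (I J : Type) (x : I -> J -> T), (forall i j, L (x i j)) ->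
  forall (s : I -> T) (m : T) (t : (I -> J) -> T) (n : T),
    (forall i, isLub L le (fun z => exists j, z = x i j) (s i)) ->
    isGlb L le (fun z => exists i, z = s i) m ->
    (forall f, isGlb L le (fun z => exists i, z = x i (f i)) (t f)) ->
    isLub L le (fun z => exists f, z = t f) n ->
    m = n.

From Stdlib Require Import Classical ClassicalEpsilon FunctionalExtensionality
  PropExtensionality Program.Basics.

(* For a complete lattice, complete distributivity is self-dual: the inequality
   \/_i /\_j x_ij <= /\_f \/_i x_i(f i) always holds, and the reverse one follows by
   applying complete distributivity of the dual order to the family (x_i(f i))_(f, i).
   Complementation maps X^▲ to (X^c)^▼ and reverses inclusion, so ℘(U)^▲ and ℘(U)^▼
   are dually isomorphic, hence completely distributive together.  The Galois
   connections △ ⊣ ▼ and ▲ ⊣ ▽ give order isomorphisms ℘(U)^△ ≅ ℘(U)^▼ and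
   ℘(U)^▲ ≅ ℘(U)^▽.  Finally, joins and meets in DM(RS) are computed coordinatewise in
   ℘(U)^▼ × ℘(U)^▲ and both projections are onto (through the pairs (X^▼, X^▲)), so
   DM(RS) is completely distributive iff ℘(U)^▼ and ℘(U)^▲ are. *)

Notation range y := (fun z => exists k, z = y k).

Section Posets.
Context {T : Type} (L : T -> Prop) (le : T -> T -> Prop).

Definition transitive_on : Prop :=
  forall a b c, L a -> L b -> L c -> le a b -> le b c -> le a c.

Definition antisymmetric_on : Prop :=
  forall a b, L a -> L b -> le a b -> le b a -> a = b.

Definition complete_on : Prop :=
  forall (K : Type) (y : K -> T), (forall k, L (y k)) ->
    (exists a, isLub L le (range y) a) /\ (exists a, isGlb L le (range y) a).

Lemma isLub_unique S a b :
  antisymmetric_on -> isLub L le S a -> isLub L le S b -> a = b.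
Proof.
  intros Hanti [La [Ua Ha]] [Lb [Ub Hb]].
  exact (Hanti a b La Lb (Ha b Lb Ub) (Hb a La Ua)).
Qed.

Lemma isGlb_unique S a b :
  antisymmetric_on -> isGlb L le S a -> isGlb L le S b -> a = b.
Proof.
  intros Hanti [La [Ua Ha]] [Lb [Ub Hb]].
  exact (Hanti a b La Lb (Hb a La Ua) (Ha b Lb Ub)).
Qed.

End Posets.

(* Otherwise pick, for each [i], a [j] that no [f] selected by [g] at [i]
   takes there; the resulting choice function [h] refutes itself at [g h]. *)
Lemma selector_full_column {I J : Type} (g : (I -> J) -> I) :
  exists i, forall j, exists f, g f = i /\ f i = j.
Proof.
  apply NNPP; intro Hnone.
  assert (Hmiss : forall i, exists j, forall f, g f = i -> f i <> j).
  { intro i; apply NNPP; intro Hall; apply Hnone; exists i; intro j.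
    apply NNPP; intro Hj; apply Hall; exists j; intros f Hgf Hfj.
    apply Hj; exists f; split; assumption. }
  destruct (choice _ Hmiss) as [h Hh].
  exact (Hh (g h) h eq_refl eq_refl).
Qed.

Lemma cd_of_cd_flip {T : Type} (L : T -> Prop) (le : T -> T -> Prop) :
  transitive_on L le -> antisymmetric_on L le -> complete_on L le ->
  completely_distributive L (flip le) -> completely_distributive L le.
Proof.
  intros Htr Hanti Hc Hcd I J x Hx s m t n Hs Hm Ht Hn.
  destruct Hm as [Lm [Um Mm]].
  assert (Ln : L n) by apply Hn.
  assert (Ls : forall i, L (s i)) by (intro i; apply (Hs i)).
  assert (Lt : forall f, L (t f)) by (intro f; apply (Ht f)).
  assert (Hnm : le n m).
  { apply Hn; [exact Lm |]. intros z [f ->]. apply Mm; [exact (Lt f) |].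
    intros z [i ->]. apply (Htr _ (x i (f i))); auto.
    - apply (Ht f). exists i; reflexivity.
    - apply (Hs i). exists (f i); reflexivity. }
  destruct (choice _ (fun g : (I -> J) -> I =>
    proj1 (Hc _ _ (fun f => Hx (g f) (f (g f)))))) as [u Hu].
  assert (Lu : forall g, L (u g)) by (intro g; apply (Hu g)).
  destruct (proj2 (Hc _ u Lu)) as [n' Hn'].
  (* complete distributivity of the dual order, applied to [x i (f i)]
     indexed by [f] and then [i], rewrites [n] as the meet of the [u g] *)
  assert (En' : n = n').
  { exact (Hcd (I -> J) I (fun f i => x i (f i)) (fun f i => Hx i (f i))
             t n u n' Ht Hn Hu Hn'). }
  assert (Hmn : le m n').
  { apply Hn'; [exact Lm |]. intros z [g ->].
    destruct (selector_full_column g) as [i Hi].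
    apply (Htr _ (s i)); auto.
    - apply Um. exists i; reflexivity.
    - apply (Hs i); [exact (Lu g) |]. intros z [j ->].
      destruct (Hi j) as [f [<- <-]]. apply (Hu g). exists f; reflexivity. }
  subst n'. exact (Hanti m n Lm Ln Hmn Hnm).
Qed.

Section Transfer.
Context {T T' : Type} (L : T -> Prop) (le : T -> T -> Prop)
  (L' : T' -> Prop) (le' : T' -> T' -> Prop) (phi : T -> T').

Definition onto_on : Prop := forall b, L' b -> exists a, L a /\ b = phi a.

Definition lub_preserving : Prop :=
  forall K (y : K -> T) a, (forall k, L (y k)) -> isLub L le (range y) a ->
    isLub L' le' (range (fun k => phi (y k))) (phi a).

Definition glb_preserving : Prop :=
  forall K (y : K -> T) a, (forall k, L (y k)) -> isGlb L le (range y) a ->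
    isGlb L' le' (range (fun k => phi (y k))) (phi a).

Lemma onto_on_family K (y' : K -> T') :
  onto_on -> (forall k, L' (y' k)) ->
  exists y, (forall k, L (y k)) /\ y' = (fun k => phi (y k)).
Proof.
  intros Honto Hy'.
  destruct (choice _ (fun k => Honto (y' k) (Hy' k))) as [y Hy].
  exists y; split; [apply Hy |].
  apply functional_extensionality; intro k; apply Hy.
Qed.

Lemma onto_on_family2 I J (x' : I -> J -> T') :
  onto_on -> (forall i j, L' (x' i j)) ->
  exists x, (forall i j, L (x i j)) /\ x' = (fun i j => phi (x i j)).
Proof.
  intros Honto Hx'.
  destruct (choice _ (fun i => onto_on_family J (x' i) Honto (Hx' i))) as [x Hx].
  exists x; split; [apply Hx |].
  apply functional_extensionality; intro i; apply Hx.
Qed.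

Section OrderEmbedding.
Hypothesis phi_L : forall a, L a -> L' (phi a).
Hypothesis phi_embed : forall a b, L a -> L b -> (le a b <-> le' (phi a) (phi b)).

Lemma isLub_of_image K (y : K -> T) a : (forall k, L (y k)) -> L a ->
  isLub L' le' (range (fun k => phi (y k))) (phi a) -> isLub L le (range y) a.
Proof.
  intros Hy La [_ [Ua Ma]]; split; [exact La | split].
  - intros z [k ->]. apply phi_embed; [apply Hy | exact La |].
    apply Ua; exists k; reflexivity.
  - intros b Lb Ub. apply phi_embed; [exact La | exact Lb |].
    apply Ma; [exact (phi_L b Lb) |]. intros z [k ->].
    apply phi_embed; [apply Hy | exact Lb |]. apply Ub; exists k; reflexivity.
Qed.

Lemma isGlb_of_image K (y : K -> T) a : (forall k, L (y k)) -> L a ->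
  isGlb L' le' (range (fun k => phi (y k))) (phi a) -> isGlb L le (range y) a.
Proof.
  intros Hy La [_ [Ua Ma]]; split; [exact La | split].
  - intros z [k ->]. apply phi_embed; [exact La | apply Hy |].
    apply Ua; exists k; reflexivity.
  - intros b Lb Ub. apply phi_embed; [exact Lb | exact La |].
    apply Ma; [exact (phi_L b Lb) |]. intros z [k ->].
    apply phi_embed; [exact Lb | apply Hy |]. apply Ub; exists k; reflexivity.
Qed.

Lemma cd_of_order_iso :
  onto_on -> completely_distributive L le -> completely_distributive L' le'.
Proof.
  intros Honto Hcd I J x' Hx' s' m' t' n' Hs Hm Ht Hn.
  destruct (onto_on_family2 I J x' Honto Hx') as [x [Hx ->]].
  destruct (onto_on_family I s' Honto (fun i => proj1 (Hs i))) as [s [Ls ->]].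
  destruct (onto_on_family _ t' Honto (fun f => proj1 (Ht f))) as [t [Lt ->]].
  destruct (Honto m' (proj1 Hm)) as [m [Lm ->]].
  destruct (Honto n' (proj1 Hn)) as [n [Ln ->]].
  f_equal; apply (Hcd I J x Hx s m t n).
  - intro i. exact (isLub_of_image _ (x i) (s i) (Hx i) (Ls i) (Hs i)).
  - exact (isGlb_of_image _ s m Ls Lm Hm).
  - intro f. exact (isGlb_of_image _ (fun i => x i (f i)) (t f)
                      (fun i => Hx i (f i)) (Lt f) (Ht f)).
  - exact (isLub_of_image _ t n Lt Ln Hn).
Qed.

End OrderEmbedding.

Lemma cd_of_complete_onto :
  complete_on L le -> antisymmetric_on L' le' -> onto_on ->
  lub_preserving -> glb_preserving ->
  completely_distributive L le -> completely_distributive L' le'.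
Proof.
  intros Hc Hanti Honto Hlub Hglb Hcd I J x' Hx' s' m' t' n' Hs Hm Ht Hn.
  destruct (onto_on_family2 I J x' Honto Hx') as [x [Hx ->]].
  destruct (choice _ (fun i => proj1 (Hc _ (x i) (Hx i)))) as [s Hs0].
  destruct (choice _ (fun f : I -> J =>
    proj2 (Hc _ (fun i => x i (f i)) (fun i => Hx i (f i))))) as [t Ht0].
  assert (Ls : forall i, L (s i)) by (intro i; apply Hs0).
  assert (Lt : forall f, L (t f)) by (intro f; apply Ht0).
  destruct (proj2 (Hc _ s Ls)) as [m Hm0].
  destruct (proj1 (Hc _ t Lt)) as [n Hn0].
  assert (Es : s' = fun i => phi (s i)).
  { apply functional_extensionality; intro i.
    exact (isLub_unique _ _ _ _ _ Hanti (Hs i) (Hlub _ _ _ (Hx i) (Hs0 i))). }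
  assert (Et : t' = fun f => phi (t f)).
  { apply functional_extensionality; intro f.
    exact (isGlb_unique _ _ _ _ _ Hanti (Ht f)
             (Hglb _ _ _ (fun i => Hx i (f i)) (Ht0 f))). }
  subst s' t'.
  rewrite (isGlb_unique _ _ _ _ _ Hanti Hm (Hglb _ _ _ Ls Hm0)),
          (isLub_unique _ _ _ _ _ Hanti Hn (Hlub _ _ _ Lt Hn0)).
  f_equal; exact (Hcd I J x Hx s m t n Hs0 Hm0 Ht0 Hn0).
Qed.

End Transfer.

(* [pair_le] is convertible to [prod_le subs subs]. *)
Definition prod_le {T1 T2 : Type} (le1 : T1 -> T1 -> Prop) (le2 : T2 -> T2 -> Prop)
  (p q : T1 * T2) : Prop := le1 (fst p) (fst q) /\ le2 (snd p) (snd q).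

Section SubProduct.
Context {T1 T2 : Type} (L : T1 * T2 -> Prop)
  (L1 : T1 -> Prop) (le1 : T1 -> T1 -> Prop) (L2 : T2 -> Prop) (le2 : T2 -> T2 -> Prop).
Hypothesis L_sub : forall p, L p -> L1 (fst p) /\ L2 (snd p).

Lemma isLub_prod K (y : K -> T1 * T2) a : L a ->
  isLub L1 le1 (range (fun k => fst (y k))) (fst a) ->
  isLub L2 le2 (range (fun k => snd (y k))) (snd a) ->
  isLub L (prod_le le1 le2) (range y) a.
Proof.
  intros La [_ [U1 M1]] [_ [U2 M2]]; split; [exact La | split].
  - intros z [k ->]; split; [apply U1 | apply U2]; exists k; reflexivity.
  - intros b Lb Ub; split.
    + apply M1; [apply L_sub, Lb |]. intros z [k ->]. apply Ub; exists k; reflexivity.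
    + apply M2; [apply L_sub, Lb |]. intros z [k ->]. apply Ub; exists k; reflexivity.
Qed.

Lemma cd_of_subproduct :
  lub_preserving L (prod_le le1 le2) L1 le1 fst ->
  lub_preserving L (prod_le le1 le2) L2 le2 snd ->
  glb_preserving L (prod_le le1 le2) L1 le1 fst ->
  glb_preserving L (prod_le le1 le2) L2 le2 snd ->
  completely_distributive L1 le1 -> completely_distributive L2 le2 ->
  completely_distributive L (prod_le le1 le2).
Proof.
  intros Hlub1 Hlub2 Hglb1 Hglb2 Hcd1 Hcd2 I J x Hx s m t n Hs Hm Ht Hn.
  assert (Ls : forall i, L (s i)) by (intro i; apply Hs).
  assert (Lt : forall f, L (t f)) by (intro f; apply Ht).
  destruct m as [m1 m2], n as [n1 n2]; f_equal.
  - apply (Hcd1 I J (fun i j => fst (x i j)) (fun i j => proj1 (L_sub _ (Hx i j)))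
             (fun i => fst (s i)) m1 (fun f => fst (t f)) n1).
    + intro i. exact (Hlub1 _ _ _ (Hx i) (Hs i)).
    + exact (Hglb1 _ _ _ Ls Hm).
    + intro f. exact (Hglb1 _ _ _ (fun i => Hx i (f i)) (Ht f)).
    + exact (Hlub1 _ _ _ Lt Hn).
  - apply (Hcd2 I J (fun i j => snd (x i j)) (fun i j => proj2 (L_sub _ (Hx i j)))
             (fun i => snd (s i)) m2 (fun f => snd (t f)) n2).
    + intro i. exact (Hlub2 _ _ _ (Hx i) (Hs i)).
    + exact (Hglb2 _ _ _ Ls Hm).
    + intro f. exact (Hglb2 _ _ _ (fun i => Hx i (f i)) (Ht f)).
    + exact (Hlub2 _ _ _ Lt Hn).
Qed.

End SubProduct.

Lemma isGlb_prod {T1 T2 : Type} (L : T1 * T2 -> Prop)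
  (L1 : T1 -> Prop) (le1 : T1 -> T1 -> Prop)
  (L2 : T2 -> Prop) (le2 : T2 -> T2 -> Prop) K (y : K -> T1 * T2) a :
  (forall p, L p -> L1 (fst p) /\ L2 (snd p)) -> L a ->
  isGlb L1 le1 (range (fun k => fst (y k))) (fst a) ->
  isGlb L2 le2 (range (fun k => snd (y k))) (snd a) ->
  isGlb L (prod_le le1 le2) (range y) a.
Proof. intro Lsub; exact (isLub_prod L L1 (flip le1) L2 (flip le2) Lsub K y a). Qed.

Section Subsets.
Context {U : Type}.

Lemma pred_ext (P Q : U -> Prop) : (forall x, P x <-> Q x) -> P = Q.
Proof.
  intro H; apply functional_extensionality; intro x.
  apply propositional_extensionality, H.
Qed.

Lemma subs_transitive (L : (U -> Prop) -> Prop) : transitive_on L (@subs U).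
Proof. intros a b c _ _ _ Hab Hbc x Hx; exact (Hbc x (Hab x Hx)). Qed.

Lemma subs_antisymmetric (L : (U -> Prop) -> Prop) : antisymmetric_on L (@subs U).
Proof. intros a b _ _ Hab Hba; apply pred_ext; intro x; split; [apply Hab | apply Hba]. Qed.

Definition bigcup {K : Type} (y : K -> U -> Prop) : U -> Prop := fun x => exists k, y k x.
Definition bigcap {K : Type} (y : K -> U -> Prop) : U -> Prop := fun x => forall k, y k x.
Definition compl (X : U -> Prop) : U -> Prop := fun x => ~ X x.

Lemma compl_involutive (X : U -> Prop) : compl (compl X) = X.
Proof. apply pred_ext; intro x; unfold compl; split; [apply NNPP | tauto]. Qed.

Lemma subs_compl (X Y : U -> Prop) : subs X Y <-> subs (compl Y) (compl X).
Proof.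
  unfold subs, compl; split; intros H x.
  - intros nYx Xx; exact (nYx (H x Xx)).
  - intro Xx; apply NNPP; intro nYx; exact (H x nYx Xx).
Qed.

Section Adjunction.
Variables f g : (U -> Prop) -> U -> Prop.
Hypothesis adjunction : forall X Y, subs (f X) Y <-> subs X (g Y).

Lemma subs_unit X : subs X (g (f X)).
Proof. apply adjunction; intros x h; exact h. Qed.

Lemma subs_counit Y : subs (f (g Y)) Y.
Proof. apply adjunction; intros x h; exact h. Qed.

Lemma left_adjoint_monotone X Y : subs X Y -> subs (f X) (f Y).
Proof. intros H; apply adjunction; intros x h; exact (subs_unit Y x (H x h)). Qed.

Lemma right_adjoint_monotone X Y : subs X Y -> subs (g X) (g Y).
Proof. intros H; apply adjunction; intros x h; exact (H x (subs_counit X x h)). Qed.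

Lemma image_left_adjoint_iff a : image_of f a <-> subs a (f (g a)).
Proof.
  split.
  - intros [X ->]. exact (left_adjoint_monotone _ _ (subs_unit X)).
  - intro H; exists (g a); apply pred_ext; intro x; split; [apply H | apply subs_counit].
Qed.

Lemma image_right_adjoint_iff a : image_of g a <-> subs (g (f a)) a.
Proof.
  split.
  - intros [Y ->]. exact (right_adjoint_monotone _ _ (subs_counit Y)).
  - intro H; exists (f a); apply pred_ext; intro x; split; [apply subs_unit | apply H].
Qed.

Lemma isLub_image_left_adjoint K (y : K -> U -> Prop) :
  (forall k, image_of f (y k)) -> isLub (image_of f) (@subs U) (range y) (bigcup y).
Proof.
  intro Hy; split; [| split].
  - apply image_left_adjoint_iff; intros x [k Hk].
    apply (left_adjoint_monotone (g (y k))).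
    + apply right_adjoint_monotone; intros z Hz; exists k; exact Hz.
    + exact (proj1 (image_left_adjoint_iff _) (Hy k) x Hk).
  - intros z [k ->] x Hx; exists k; exact Hx.
  - intros b _ Ub x [k Hk]; apply (Ub (y k)); [exists k; reflexivity | exact Hk].
Qed.

Lemma isGlb_image_left_adjoint K (y : K -> U -> Prop) :
  (forall k, image_of f (y k)) ->
  isGlb (image_of f) (@subs U) (range y) (f (g (bigcap y))).
Proof.
  intro Hy; split; [| split].
  - exists (g (bigcap y)); reflexivity.
  - intros z [k ->] x Hx; exact (subs_counit _ x Hx k).
  - intros b Lb Ub x Hx.
    apply (left_adjoint_monotone (g b)); [| exact (proj1 (image_left_adjoint_iff _) Lb x Hx)].
    apply right_adjoint_monotone; intros z Hz k.
    apply (Ub (y k)); [exists k; reflexivity | exact Hz].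
Qed.

Lemma isGlb_image_right_adjoint K (y : K -> U -> Prop) :
  (forall k, image_of g (y k)) -> isGlb (image_of g) (@subs U) (range y) (bigcap y).
Proof.
  intro Hy; split; [| split].
  - apply image_right_adjoint_iff; intros x Hx k.
    apply (proj1 (image_right_adjoint_iff _) (Hy k)).
    apply (right_adjoint_monotone (f (bigcap y))); [| exact Hx].
    apply left_adjoint_monotone; intros z Hz; exact (Hz k).
  - intros z [k ->] x Hx; exact (Hx k).
  - intros b _ Ub x Hx k; apply (Ub (y k)); [exists k; reflexivity | exact Hx].
Qed.

Lemma isLub_image_right_adjoint K (y : K -> U -> Prop) :
  (forall k, image_of g (y k)) ->
  isLub (image_of g) (@subs U) (range y) (g (f (bigcup y))).
Proof.
  intro Hy; split; [| split].
  - exists (f (bigcup y)); reflexivity.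
  - intros z [k ->] x Hx; apply subs_unit; exists k; exact Hx.
  - intros b Lb Ub x Hx.
    apply (proj1 (image_right_adjoint_iff _) Lb).
    apply (right_adjoint_monotone (f (bigcup y))); [| exact Hx].
    apply left_adjoint_monotone; intros z [k Hk].
    apply (Ub (y k)); [exists k; reflexivity | exact Hk].
Qed.

Lemma complete_image_left_adjoint : complete_on (image_of f) (@subs U).
Proof.
  intros K y Hy; split; eexists;
    [apply isLub_image_left_adjoint | apply isGlb_image_left_adjoint]; exact Hy.
Qed.

Lemma complete_image_right_adjoint : complete_on (image_of g) (@subs U).
Proof.
  intros K y Hy; split; eexists;
    [apply isLub_image_right_adjoint | apply isGlb_image_right_adjoint]; exact Hy.
Qed.

Lemma cd_image_adjoint_iff :
  completely_distributive (image_of f) (@subs U) <->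
  completely_distributive (image_of g) (@subs U).
Proof.
  assert (Hgfg : forall Y, g (f (g Y)) = g Y).
  { intro Y; symmetry; apply pred_ext; intro x; split;
      [apply subs_unit | apply right_adjoint_monotone, subs_counit]. }
  assert (Hfgf : forall X, f (g (f X)) = f X).
  { intro X; apply pred_ext; intro x; split;
      [apply subs_counit | apply left_adjoint_monotone, subs_unit]. }
  split; [apply (cd_of_order_iso _ _ _ _ g) | apply (cd_of_order_iso _ _ _ _ f)].
  - intros a _; exists a; reflexivity.
  - intros a b [X ->] [X' ->]; split; [apply right_adjoint_monotone |].
    intro H; rewrite <- (Hfgf X), <- (Hfgf X'); apply left_adjoint_monotone, H.
  - intros b [Y ->]; exists (f (g Y)); split; [exists (g Y); reflexivity | symmetry; apply Hgfg].
  - intros a _; exists a; reflexivity.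
  - intros a b [Y ->] [Y' ->]; split; [apply left_adjoint_monotone |].
    intro H; rewrite <- (Hgfg Y), <- (Hgfg Y'); apply right_adjoint_monotone, H.
  - intros b [X ->]; exists (g (f X)); split; [exists (f X); reflexivity | symmetry; apply Hfgf].
Qed.

End Adjunction.

Lemma cd_image_de_morgan_dual (f f' : (U -> Prop) -> U -> Prop) :
  (forall X, f' X = compl (f (compl X))) -> complete_on (image_of f') (@subs U) ->
  completely_distributive (image_of f) (@subs U) ->
  completely_distributive (image_of f') (@subs U).
Proof.
  intros Hdual Hc Hcd.
  apply (cd_of_cd_flip _ _ (subs_transitive _) (subs_antisymmetric _) Hc).
  apply (cd_of_order_iso (image_of f) (@subs U) _ _ compl); [| | | exact Hcd].
  - intros a [X ->]; exists (compl X).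
    rewrite Hdual, compl_involutive; reflexivity.
  - intros a b _ _; apply subs_compl.
  - intros b [Y ->]; exists (f (compl Y)); split; [exists (compl Y); reflexivity | apply Hdual].
Qed.

End Subsets.

Section RoughApproximations.
Variables (U : Type) (R : U -> U -> Prop).

Lemma diaW_boxB_adjunction X Y : subs (diaW R X) Y <-> subs X (boxB R Y).
Proof.
  split.
  - intros H y Xy x Ryx; exact (H x (ex_intro _ y (conj Ryx Xy))).
  - intros H x [y [Ryx Xy]]; exact (H y Xy x Ryx).
Qed.

Lemma diaB_boxW_adjunction X Y : subs (diaB R X) Y <-> subs X (boxW R Y).
Proof.
  split.
  - intros H y Xy x Rxy; exact (H x (ex_intro _ y (conj Rxy Xy))).
  - intros H x [y [Rxy Xy]]; exact (H y Xy x Rxy).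
Qed.

Lemma boxB_de_morgan X : boxB R X = compl (diaB R (compl X)).
Proof.
  apply pred_ext; intro x; unfold compl; split.
  - intros H [y [Rxy nXy]]; exact (nXy (H y Rxy)).
  - intros H y Rxy; apply NNPP; intro nXy; apply H; exists y; split; assumption.
Qed.

Lemma diaB_de_morgan X : diaB R X = compl (boxB R (compl X)).
Proof. rewrite boxB_de_morgan, !compl_involutive; reflexivity. Qed.

Lemma DMRS_pair X : DMRS R (boxB R X, diaB R X).
Proof.
  split; [exists X; reflexivity | split; [exists X; reflexivity | split]].
  - intros x [w [Rxw [v [Rvw Hv]]]]; exists w; split; [exact Rxw | exact (Hv w Rvw)].
  - intros x [y [Rxy Hy]]; cbn; split.
    + intro H; exists y; split; [exact Rxy | exact (H y Rxy)].
    + intros [w [Rxw Xw]] z Rxz; rewrite (Hy z Rxz), <- (Hy w Rxw); exact Xw.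
Qed.

Definition DMjoin {K : Type} (y : K -> (U -> Prop) * (U -> Prop)) :=
  (boxB R (diaW R (bigcup (fun k => fst (y k)))), bigcup (fun k => snd (y k))).

Definition DMmeet {K : Type} (y : K -> (U -> Prop) * (U -> Prop)) :=
  (bigcap (fun k => fst (y k)), diaB R (boxW R (bigcap (fun k => snd (y k))))).

Section Family.
Variables (K : Type) (y : K -> (U -> Prop) * (U -> Prop)).
Hypothesis DMRS_y : forall k, DMRS R (y k).

Let boxB_fst k : image_of (boxB R) (fst (y k)) := proj1 (DMRS_y k).
Let diaB_snd k : image_of (diaB R) (snd (y k)) := proj1 (proj2 (DMRS_y k)).
Let fst_snd k : subs (diaB R (diaW R (fst (y k)))) (snd (y k)) :=
  proj1 (proj2 (proj2 (DMRS_y k))).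
Let fst_snd_Sgl k x : Sgl R x -> (fst (y k) x <-> snd (y k) x) :=
  proj2 (proj2 (proj2 (DMRS_y k))) x.

Lemma DMRS_join : DMRS R (DMjoin y).
Proof.
  split; [exists (diaW R (bigcup (fun k => fst (y k)))); reflexivity | split].
  - exact (proj1 (isLub_image_left_adjoint _ _ diaB_boxW_adjunction _ _ diaB_snd)).
  - cbn; split.
    + intros x [w [Rxw [v [Rvw Hv]]]].
      destruct (Hv w Rvw) as [u [Ruw [k Hk]]]; exists k; apply fst_snd.
      exists w; split; [exact Rxw | exists u; split; assumption].
    + intros x Sx; split.
      * intro Hx; destruct Sx as [w [Rxw _]].
        destruct (Hx w Rxw) as [u [Ruw [k Hk]]]; exists k; apply fst_snd.
        exists w; split; [exact Rxw | exists u; split; assumption].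
      * intros [k Hk] w Rxw; exists x; split; [exact Rxw |].
        exists k; apply (fst_snd_Sgl k x Sx), Hk.
Qed.

Lemma DMRS_meet : DMRS R (DMmeet y).
Proof.
  split; [exact (proj1 (isGlb_image_right_adjoint _ _ diaW_boxB_adjunction _ _ boxB_fst)) |].
  split; [exists (boxW R (bigcap (fun k => snd (y k)))); reflexivity |].
  cbn; split.
  - intros x [w [Rxw [v [Rvw Hv]]]]; exists w; split; [exact Rxw |].
    intros z Rzw k; apply fst_snd.
    exists w; split; [exact Rzw | exists v; split; [exact Rvw | exact (Hv k)]].
  - intros x Sx; split.
    + intro Hx; destruct Sx as [w [Rxw _]]; exists w; split; [exact Rxw |].
      intros z Rzw k; apply fst_snd.
      exists w; split; [exact Rzw | exists x; split; [exact Rxw | exact (Hx k)]].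
    + intros [w [Rxw Hw]] k; apply (fst_snd_Sgl k x Sx), (Hw x Rxw).
Qed.

End Family.

Lemma DMRS_coords p : DMRS R p -> image_of (boxB R) (fst p) /\ image_of (diaB R) (snd p).
Proof. intros [HB [HD _]]; split; assumption. Qed.

Lemma pair_le_antisymmetric : antisymmetric_on (DMRS R) (@pair_le U).
Proof.
  intros [a1 a2] [b1 b2] _ _ [H1 H2] [H3 H4]; f_equal;
    apply (subs_antisymmetric (fun _ => True)); auto.
Qed.

Lemma isLub_DMRS K (y : K -> (U -> Prop) * (U -> Prop)) :
  (forall k, DMRS R (y k)) -> isLub (DMRS R) (@pair_le U) (range y) (DMjoin y).
Proof.
  intro Hy; apply (isLub_prod _ _ _ _ _ DMRS_coords); [apply DMRS_join, Hy | |].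
  - apply (isLub_image_right_adjoint _ _ diaW_boxB_adjunction); intro k; apply Hy.
  - apply (isLub_image_left_adjoint _ _ diaB_boxW_adjunction); intro k; apply Hy.
Qed.

Lemma isGlb_DMRS K (y : K -> (U -> Prop) * (U -> Prop)) :
  (forall k, DMRS R (y k)) -> isGlb (DMRS R) (@pair_le U) (range y) (DMmeet y).
Proof.
  intro Hy; apply (isGlb_prod _ _ _ _ _ _ _ _ DMRS_coords); [apply DMRS_meet, Hy | |].
  - apply (isGlb_image_right_adjoint _ _ diaW_boxB_adjunction); intro k; apply Hy.
  - apply (isGlb_image_left_adjoint _ _ diaB_boxW_adjunction); intro k; apply Hy.
Qed.

Lemma complete_DMRS : complete_on (DMRS R) (@pair_le U).
Proof.
  intros K y Hy; split; eexists; [apply isLub_DMRS | apply isGlb_DMRS]; exact Hy.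
Qed.

Lemma lub_preserving_DMRS_fst :
  lub_preserving (DMRS R) (@pair_le U) (image_of (boxB R)) (@subs U) fst.
Proof.
  intros K y a Hy Ha.
  rewrite (isLub_unique _ _ _ _ _ pair_le_antisymmetric Ha (isLub_DMRS K y Hy)).
  apply (isLub_image_right_adjoint _ _ diaW_boxB_adjunction); intro k; apply Hy.
Qed.

Lemma lub_preserving_DMRS_snd :
  lub_preserving (DMRS R) (@pair_le U) (image_of (diaB R)) (@subs U) snd.
Proof.
  intros K y a Hy Ha.
  rewrite (isLub_unique _ _ _ _ _ pair_le_antisymmetric Ha (isLub_DMRS K y Hy)).
  apply (isLub_image_left_adjoint _ _ diaB_boxW_adjunction); intro k; apply Hy.
Qed.

Lemma glb_preserving_DMRS_fst :
  glb_preserving (DMRS R) (@pair_le U) (image_of (boxB R)) (@subs U) fst.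
Proof.
  intros K y a Hy Ha.
  rewrite (isGlb_unique _ _ _ _ _ pair_le_antisymmetric Ha (isGlb_DMRS K y Hy)).
  apply (isGlb_image_right_adjoint _ _ diaW_boxB_adjunction); intro k; apply Hy.
Qed.

Lemma glb_preserving_DMRS_snd :
  glb_preserving (DMRS R) (@pair_le U) (image_of (diaB R)) (@subs U) snd.
Proof.
  intros K y a Hy Ha.
  rewrite (isGlb_unique _ _ _ _ _ pair_le_antisymmetric Ha (isGlb_DMRS K y Hy)).
  apply (isGlb_image_left_adjoint _ _ diaB_boxW_adjunction); intro k; apply Hy.
Qed.

Lemma cd_DMRS_iff :
  completely_distributive (DMRS R) (@pair_le U) <->
  completely_distributive (image_of (boxB R)) (@subs U) /\
  completely_distributive (image_of (diaB R)) (@subs U).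
Proof.
  split.
  - intro Hcd; split.
    + apply (cd_of_complete_onto _ _ _ _ fst complete_DMRS (subs_antisymmetric _));
        [| apply lub_preserving_DMRS_fst | apply glb_preserving_DMRS_fst | exact Hcd].
      intros b [X ->]; exists (boxB R X, diaB R X); split; [apply DMRS_pair | reflexivity].
    + apply (cd_of_complete_onto _ _ _ _ snd complete_DMRS (subs_antisymmetric _));
        [| apply lub_preserving_DMRS_snd | apply glb_preserving_DMRS_snd | exact Hcd].
      intros b [X ->]; exists (boxB R X, diaB R X); split; [apply DMRS_pair | reflexivity].
  - intros [HB HD].
    exact (cd_of_subproduct _ _ _ _ _ DMRS_coords lub_preserving_DMRS_fst
             lub_preserving_DMRS_snd glb_preserving_DMRS_fst glb_preserving_DMRS_snd HB HD).
Qed.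

Lemma cd_boxB_iff_diaB :
  completely_distributive (image_of (boxB R)) (@subs U) <->
  completely_distributive (image_of (diaB R)) (@subs U).
Proof.
  split; apply cd_image_de_morgan_dual.
  - apply diaB_de_morgan.
  - apply (complete_image_left_adjoint _ _ diaB_boxW_adjunction).
  - apply boxB_de_morgan.
  - apply (complete_image_right_adjoint _ _ diaW_boxB_adjunction).
Qed.

End RoughApproximations.

Theorem mainTheorem4 (U : Type) (R : U -> U -> Prop) :
  (completely_distributive (DMRS R) (@pair_le U) <->
     completely_distributive (image_of (diaB R)) (@subs U)) /\
  (completely_distributive (DMRS R) (@pair_le U) <->
     completely_distributive (image_of (boxB R)) (@subs U)) /\
  (completely_distributive (DMRS R) (@pair_le U) <->
     completely_distributive (image_of (diaW R)) (@subs U)) /\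
  (completely_distributive (DMRS R) (@pair_le U) <->
     completely_distributive (image_of (boxW R)) (@subs U)).
Proof.
  pose proof (cd_boxB_iff_diaB U R) as HBD.
  assert (HB : completely_distributive (DMRS R) (@pair_le U) <->
               completely_distributive (image_of (boxB R)) (@subs U)).
  { rewrite cd_DMRS_iff, <- HBD; tauto. }
  assert (HD : completely_distributive (DMRS R) (@pair_le U) <->
               completely_distributive (image_of (diaB R)) (@subs U)).
  { rewrite HB; exact HBD. }
  split; [exact HD | split; [exact HB | split]].
  - rewrite HB; symmetry; apply cd_image_adjoint_iff, diaW_boxB_adjunction.
  - rewrite HD; apply cd_image_adjoint_iff, diaB_boxW_adjunction.
Qed.
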